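(* Let $f : 2^V \to \mathbb{Z}_{\ge 0}$ be a connectivity function and $(T,L)$ a branch decomposition of $f$ of width $k$ having $h \ge 1$ edges of width $k$. Let $uv$ be an edge of $T$ with $f(uv)=k$, inducing the bipartition $(W, V\setminus W)$ where $W$ is the set of elements of $V$ mapped to leaves on $u$'s side. If there exists a $W$-improvement, then there exists a $W$-improvement $(C_1,C_2,C_3)$ such that the refinement of $(T,L)$ with $(uv,C_1,C_2,C_3)$ has width at most $k$ and has fewer than $h$ edges of width $k$.
   Context: A connectivity function $f:2^V\to\mathbb{Z}_{\ge0}$ ($V$ finite) satisfies $f(\emptyset)=0$, $f(X)=f(V\setminus X)$, and $f(X\cup Y)+f(X\cap Y)\le f(X)+f(Y)$. A branch decomposition of $f$ is $(T,L)$ with $T$ a tree whose nodes have degree 1 or 3 and $L$ a bijection from $V$ to the leaves of $T$; an edge $e$ of $T$ induces via $T-e$ a bipartition $(X,V\setminus X)$ and has width $f(e)=f(X)$; the width of $(T,L)$ is the maximum edge width. For $W\subseteq V$, a $W$-improvement is a tripartition $(C_1,C_2,C_3)$ of $V$ (pairwise disjoint, possibly empty, union $V$) such that for each $i$: $f(C_i)<f(W)/2$, $f(C_i\cap W)<f(W)$ and $f(C_i\cap (V\setminus W))<f(W)$. A partial branch decomposition is a pair $(T,L)$ with $T$ as before and $L$ an injection from a subset of $V$ into the leaves. The refinement of $(T,L)$ with $(uv,C_1,C_2,C_3)$ is defined as follows: for each $i\in\{1,2,3\}$ take a copy $T_i$ of $T$ with labeling $L$ restricted to $C_i$, let $u_iv_i$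 be the copy of $uv$ in $T_i$, and subdivide $u_iv_i$ by a new node $w_i$; take the disjoint union of $T_1,T_2,T_3$ and add a new node $t$ adjacent to $w_1,w_2,w_3$; finally, repeatedly delete degree-1 nodes that are not labeled and suppress degree-2 nodes (a degree-2 node with neighbors $a,b$ is deleted and replaced by the edge $ab$). *)

From mathcomp Require Import all_boot.
Set Implicit Arguments. Unset Strict Implicit. Unset Printing Implicit Defensive.

Definition connectivity_function (V : finType) (f : {set V} -> nat) : Prop :=
  [/\ f set0 = 0%N,
      (forall X, f (~: X) = f X) &
      (forall X Y, f (X :|: Y) + f (X :&: Y) <= f X + f Y)].

Section Graphs.
Variable N : finType.
Implicit Types (E : {set {set N}}) (x y : N).

Definition adj E : rel N := fun x y => [set x; y] \in E.
Definition deg E x : nat := #|[set y | [set x; y] \in E]|.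

Definition is_tree E : Prop :=
  [/\ (forall e, e \in E -> #|e| = 2),
      (forall x y, connect (adj E) x y) &
      (forall e a b, e \in E -> e = [set a; b] -> ~~ connect (adj (E :\ e)) a b)].

Variable V : finType.
Implicit Types (L : V -> N) (f : {set V} -> nat).

Definition is_branch_decomp E L : Prop :=
  [/\ is_tree E,
      (forall x, deg E x = 1 \/ deg E x = 3),
      injective L &
      (forall n, deg E n = 1 <-> exists z, L z = n)].

Definition side E L (e : {set N}) (a : N) : {set V} :=
  [set z | connect (adj (E :\ e)) a (L z)].

(* width of an edge e: f of the bipartition induced by T - e
   (both sides give the same value since f is symmetric; we take the max) *)
Definition ewidth f E L (e : {set N}) : nat := \max_(a in e) f (side E L e a).
Definition width f E L : nat := \max_(e in E) ewidth f E L e.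
Definition nwide f E L (k : nat) : nat := #|[set e in E | ewidth f E L e == k]|.
End Graphs.

Definition tripartition (V : finType) (C1 C2 C3 : {set V}) : Prop :=
  [/\ [disjoint C1 & C2], [disjoint C1 & C3], [disjoint C2 & C3]
    & C1 :|: C2 :|: C3 = setT].

Definition improvement (V : finType) (f : {set V} -> nat) (W C1 C2 C3 : {set V}) : Prop :=
  tripartition C1 C2 C3 /\
  forall C, C \in [:: C1; C2; C3] ->
    [/\ (f C).*2 < f W, f (C :&: W) < f W & f (C :\: W) < f W].

(* nodes: inl (n, i) = copy of n in T_i ; inr (Some i) = w_i ; inr None = t *)
Definition rnode (N : finType) : finType := (N * 'I_3 + option 'I_3)%type.

Definition i0 : 'I_3 := @Ordinal 3 0 isT.
Definition i1 : 'I_3 := @Ordinal 3 1 isT.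
Definition i2 : 'I_3 := @Ordinal 3 2 isT.

Section Refine.
Variables (N V : finType).

Definition rcopy (i : 'I_3) (n : N) : rnode N := inl (n, i).
Definition rw (i : 'I_3) : rnode N := inr (Some i).
Definition rt : rnode N := inr None.

(* disjoint union of the three copies, each copy's uv subdivided by w_i,
   plus t adjacent to w_1, w_2, w_3 *)
Definition refine_edges (E : {set {set N}}) (u v : N) : {set {set rnode N}} :=
  \bigcup_(i : 'I_3)
    ([set rcopy i @: (e : {set N}) | e in E :\ [set u; v]] :|:
     [set [set rcopy i u; rw i]; [set rw i; rcopy i v]; [set rw i; rt]]).

Definition refine_lab (L : V -> N) (C1 C2 : {set V}) (z : V) : rnode N :=
  rcopy (if z \in C1 then i0 else if z \in C2 then i1 else i2) (L z).

(* a graph state: (live nodes, edges) ; lab = set of labeled nodes *)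
Definition gstate := ({set rnode N} * {set {set rnode N}})%type.

Inductive red_step (lab : pred (rnode N)) : gstate -> gstate -> Prop :=
| red_delete (x : rnode N) (S : {set rnode N}) E :
    x \in S -> ~~ lab x -> deg E x = 1 ->
    red_step lab (S, E) (S :\ x, [set e in E | x \notin e])
| red_suppress (x a b : rnode N) (S : {set rnode N}) E :
    x \in S -> deg E x = 2 -> a != b -> [set x; a] \in E -> [set x; b] \in E ->
    red_step lab (S, E) (S :\ x, [set e in E | x \notin e] :|: [set [set a; b]]).

Inductive red_star (lab : pred (rnode N)) : gstate -> gstate -> Prop :=
| red_refl s : red_star lab s s
| red_trans s1 s2 s3 : red_step lab s1 s2 -> red_star lab s2 s3 -> red_star lab s1 s3.

Definition red_terminal (lab : pred (rnode N)) (s : gstate) : Prop :=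
  forall x, x \in s.1 -> ~ ((~~ lab x /\ deg s.2 x = 1) \/ deg s.2 x = 2).

Definition is_refinement (E : {set {set N}}) (L : V -> N) (u v : N)
    (C1 C2 C3 : {set V}) (s : gstate) : Prop :=
  let lab := [pred n | n \in codom (refine_lab L C1 C2)] in
  red_star lab (setT, refine_edges E u v) s /\ red_terminal lab s.
End Refine.

(* Take a W-improvement (C1, C2, C3) minimising f C1 + f C2 + f C3.  By submodularity,
   minimality forces f (X :&: Ci) <= f X for every X contained in W or in its complement:
   otherwise moving X into Ci would give a cheaper improvement.  In the refinement before
   reduction, the copy in T_i of an edge whose side X avoids uv thus has width
   f (Ci :&: X) <= f X <= k, the new edges have widths f (Ci :&: W), f (Ci :\: W) and f Ci,
   all below f W = k, and two copies of the same edge cannot both have width k, by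
   uncrossing X with two disjoint parts of width below k/2.  So the wide edges of the
   unreduced refinement inject into the wide edges of T other than uv.  Deleting
   unlabelled leaves and suppressing degree-two nodes only ever produces edges inducing
   bipartitions of distinct unreduced edges, so these bounds survive the reduction. *)

From mathcomp Require Import all_boot zify.
Set Implicit Arguments. Unset Strict Implicit. Unset Printing Implicit Defensive.

Section Graphs.
Variable N : finType.
Implicit Types (G F : {set {set N}}) (e : {set N}) (a b c d p q x y z : N).

Lemma adjC G : symmetric (adj G).
Proof. by move=> x y; rewrite /adj setUC. Qed.

Lemma connect_adjC G x y : connect (adj G) x y = connect (adj G) y x.
Proof. by have := sym_connect_sym (adjC G); apply. Qed.

Lemma connect_adj_r G x y z : adj G y z -> connect (adj G) x y = connect (adj G) x z.
Proof. by move=> Gyz; apply: (same_connect1r (sym_connect_sym (adjC G)) Gyz x). Qed.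

Lemma connect_adjS G F : G \subset F -> subrel (connect (adj G)) (connect (adj F)).
Proof.
move=> sGF; apply: connect_sub => x y Gxy; apply: connect1.
by rewrite /adj (subsetP sGF).
Qed.

Lemma connect_map (T : finType) (r : rel N) (r' : rel T) (g : N -> T) :
  (forall x y, r x y -> connect r' (g x) (g y)) ->
  forall x y, connect r x y -> connect r' (g x) (g y).
Proof.
move=> gr x y /connectP [s pth ->]; elim: s x pth => //= z s IHs x /andP [rxz pz].
exact: connect_trans (gr _ _ rxz) (IHs _ pz).
Qed.

Lemma set2_inj a b c d : [set a; b] = [set c; d] -> (a = c /\ b = d) \/ (a = d /\ b = c).
Proof.
move=> eq_ab.
have /set2P ha : a \in [set c; d] by rewrite -eq_ab set21.
have /set2P hb : b \in [set c; d] by rewrite -eq_ab set22.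
have /set2P hc : c \in [set a; b] by rewrite eq_ab set21.
have /set2P hd : d \in [set a; b] by rewrite eq_ab set22.
by case: ha hb hc hd => -> [] -> [] // ? [] ?; auto.
Qed.

Lemma set2_injr a b c : [set a; b] = [set a; c] -> b = c.
Proof. by case/set2_inj => [[_ ->] | [-> ->]]. Qed.

Lemma edge_neq G x y : {in G, forall e, #|e| = 2} -> [set x; y] \in G -> x != y.
Proof. by move=> G2 /G2; rewrite cards2; case: (x != y). Qed.

Lemma edge_setD1 G e e' p : e' \in G -> p \in e' -> p \notin e -> e' \in G :\ e.
Proof. by move=> Ge' pe' pe; rewrite !inE Ge' andbT; apply: contraNneq pe => <-. Qed.

Lemma connect_split_edge G e p q : connect (adj G) p q ->
  connect (adj (G :\ e)) p q \/
  ((exists2 c, c \in e & connect (adj (G :\ e)) p c) /\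
   (exists2 c, c \in e & connect (adj (G :\ e)) c q)).
Proof.
move/connectP => [s pth ->]; elim/last_ind: s pth => [|s z IHs] /=; first by left.
rewrite rcons_path last_rcons => /andP [/IHs {}IHs Gz].
have [He | Hne] := eqVneq [set last p s; z] e.
  right; split; last by exists z; rewrite // -He set22.
  by case: IHs => [C | [//]]; exists (last p s); rewrite // -He set21.
have Ez : adj (G :\ e) (last p s) z by rewrite /adj !inE Hne.
case: IHs => [C | [Cp [c ce C2]]]; first by left; apply: connect_trans C (connect1 Ez).
by right; split => //; exists c => //; apply: connect_trans C2 (connect1 Ez).
Qed.

Lemma connect_bypass G F x y p q :
  (forall c d, adj G c d -> c != x -> d != x -> connect (adj F) c d) ->
  (forall z, adj G x z -> z != x -> connect (adj F) y z) ->
  connect (adj G) p q ->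
  connect (adj F) (if p == x then y else p) (if q == x then y else q).
Proof.
move=> G_off G_x.
apply: (connect_map (g := fun w => if w == x then y else w)) => c d Gcd /=.
have [cx | cx] := eqVneq c x; have [dx | dx] := eqVneq d x; subst => //.
- exact: G_x.
- by rewrite connect_adjC; apply: G_x; rewrite // adjC.
- exact: G_off.
Qed.

Lemma deg1P G x : deg G x = 1 -> exists y, forall z, ([set x; z] \in G) = (z == y).
Proof. by move/eqP/cards1P => [y /setP Hy]; exists y => z; have := Hy z; rewrite !inE. Qed.

Lemma deg2P G x a b : deg G x = 2 -> a != b -> [set x; a] \in G -> [set x; b] \in G ->
  forall z, ([set x; z] \in G) = (z == a) || (z == b).
Proof.
move=> dx ab xa xb.
have : [set a; b] == [set y | [set x; y] \in G].
  rewrite eqEcard cards2 ab -/(deg G x) dx leqnn andbT.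
  by apply/subsetP => z /set2P [] ->; rewrite inE.
by move/eqP/setP => Hn z; have := Hn z; rewrite !inE.
Qed.

Lemma closed_bridge G c d (rho : pred N) :
  closed (adj G) rho -> rho c -> ~~ rho d -> ~~ connect (adj G) c d.
Proof.
move=> rho_closed rc; apply: contra => cd.
by have <- : rho c = rho d := closed_connect rho_closed cd.
Qed.

End Graphs.

Section Sides.
Variables (N V : finType) (G : {set {set N}}) (L : V -> N).
Hypothesis G_connected : forall x y : N, connect (adj G) x y.
Implicit Types (c d q : N).

Lemma connect_edge_ends c d q :
  connect (adj (G :\ [set c; d])) c q \/ connect (adj (G :\ [set c; d])) d q.
Proof.
case: (connect_split_edge [set c; d] (G_connected c q)) => [|[_ [x]]]; first by left.
by case/set2P => -> ?; [left | right].
Qed.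

Lemma side_compl c d : ~~ connect (adj (G :\ [set c; d])) c d ->
  side G L [set c; d] d = ~: side G L [set c; d] c.
Proof.
move=> ncd; apply/setP => z; rewrite !inE.
have [cz | dz] := connect_edge_ends c d (L z).
  rewrite cz; apply/negP => dz; case/negP: ncd.
  by apply: connect_trans cz _; rewrite connect_adjC.
rewrite dz; apply/esym/negP => cz; case/negP: ncd.
by apply: connect_trans cz _; rewrite connect_adjC.
Qed.

Lemma closed_side c d (rho : pred N) :
  closed (adj (G :\ [set c; d])) rho -> rho c -> ~~ rho d ->
  side G L [set c; d] c = [set z | rho (L z)].
Proof.
move=> rho_closed rc nrd.
have rhoE p q : connect (adj (G :\ [set c; d])) p q -> rho p = rho q.
  exact: (closed_connect (a := rho) rho_closed).
apply/setP => z; rewrite !inE; apply/idP/idP => [/rhoE <- // | rz].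
have [// | dz] := connect_edge_ends c d (L z).
by move: nrd; rewrite (rhoE _ _ dz) rz.
Qed.

Lemma ewidth_bridge (f : {set V} -> nat) c d :
  (forall X, f (~: X) = f X) -> ~~ connect (adj (G :\ [set c; d])) c d ->
  ewidth f G L [set c; d] = f (side G L [set c; d] c).
Proof.
move=> fC ncd; apply/eqP; rewrite eqn_leq; apply/andP; split.
  by apply/bigmax_leqP => a /set2P [] ->; rewrite ?(side_compl ncd) ?fC.
by rewrite /ewidth (bigD1 c) ?set21 //= leq_maxl.
Qed.

Lemma closed_ewidth (f : {set V} -> nat) c d (rho : pred N) :
  (forall X, f (~: X) = f X) -> closed (adj (G :\ [set c; d])) rho -> rho c -> ~~ rho d ->
  ewidth f G L [set c; d] = f [set z | rho (L z)].
Proof.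
move=> fC rho_closed rc nrd.
by rewrite (ewidth_bridge fC (closed_bridge rho_closed rc nrd)) (closed_side rho_closed rc nrd).
Qed.

End Sides.

Section Reduction.
Variables (M V : finType) (Lp : V -> M) (lab : pred M) (E0 : {set {set M}}).
Hypothesis lab_Lp : forall z, lab (Lp z).
Implicit Types (E : {set {set M}}) (e : {set M}) (a b c d x : M).

(* The third clause guarantees that suppressed nodes carry no label. *)
Definition reduction_inv E : Prop :=
  [/\ {in E, forall e, #|e| = 2},
      forall c d, [set c; d] \in E -> ~~ connect (adj (E :\ [set c; d])) c d,
      forall n m1 m2, lab n -> [set n; m1] \in E -> [set n; m2] \in E -> m1 = m2
    & exists phi : {set M} -> {set M},
      [/\ {in E, forall e, phi e \in E0}, {in E &, injective phi} &
          forall e, e \in E -> forall a, a \in e ->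
            exists2 a0, a0 \in phi e & side E Lp e a = side E0 Lp (phi e) a0]].

Lemma reduction_inv_delete E x : reduction_inv E -> ~~ lab x -> deg E x = 1 ->
  reduction_inv [set e in E | x \notin e].
Proof.
move=> [E2 E_bridge E_lab [phi [phiE phi_inj phi_side]]] nlx /deg1P [y xyE].
set E' := [set e in E | x \notin e].
have sE' : E' \subset E by apply/subsetP => e; rewrite inE => /andP [].
have E'E e : e \in E' -> e \in E := subsetP sE' e.
split.
- by move=> e /E'E /E2.
- move=> c d /E'E /E_bridge; apply: contra.
  exact: connect_adjS (setSD _ sE') _ _.
- by move=> n m1 m2 ln /E'E h1 /E'E h2; apply: E_lab h1 h2.
exists phi; split.
- by move=> e /E'E /phiE.
- by move=> e1 e2 /E'E h1 /E'E h2; apply: phi_inj.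
move=> e; rewrite inE => /andP [eE xe] a ae.
have [a0 a0e sideE] := phi_side e eE a ae; exists a0; rewrite // -sideE.
apply/setP => z; rewrite !inE; apply/idP/idP; first exact: connect_adjS (setSD _ sE') _ _.
have ax : a != x by apply: contraNneq xe => <-.
have Lx : Lp z != x by apply: contraNneq nlx => <-.
have off c d : adj (E :\ e) c d -> c != x -> d != x -> connect (adj (E' :\ e)) c d.
  rewrite /adj !inE => /andP [cde cdE] cx dx; apply: connect1.
  by rewrite /adj !inE cde cdE negb_or !(eq_sym x) cx dx.
have at_x z' : adj (E :\ e) x z' -> z' != x -> connect (adj (E' :\ e)) y z'.
  by rewrite /adj !inE xyE => /andP [_ /eqP ->].
by move=> /(connect_bypass off at_x); rewrite (negbTE ax) (negbTE Lx).
Qed.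

Section Suppress.
Variables (E : {set {set M}}) (x a b : M).
Hypotheses (E2 : {in E, forall e, #|e| = 2})
  (E_bridge : forall c d, [set c; d] \in E -> ~~ connect (adj (E :\ [set c; d])) c d)
  (E_lab : forall n m1 m2, lab n -> [set n; m1] \in E -> [set n; m2] \in E -> m1 = m2).
Hypotheses (deg_x : deg E x = 2) (neq_ab : a != b)
  (xa_E : [set x; a] \in E) (xb_E : [set x; b] \in E).

Local Notation E' := ([set e in E | x \notin e] :|: [set [set a; b]]).

Let neq_xa : x != a := edge_neq E2 xa_E.
Let neq_xb : x != b := edge_neq E2 xb_E.
Let b_xa : b \notin [set x; a].
Proof. by rewrite !inE negb_or !(eq_sym b) neq_xb. Qed.

Let x_b : adj (E :\ [set x; a]) x b.
Proof. by rewrite /adj (edge_setD1 xb_E (set22 x b) b_xa). Qed.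

Lemma suppress_unlabelled : ~~ lab x.
Proof. by apply/negP => lx; move: neq_ab; rewrite (E_lab lx xa_E xb_E) eqxx. Qed.

Lemma suppress_new_edge : [set a; b] \notin E.
Proof.
apply/negP => ab_E; case/negP: (E_bridge xa_E).
have b_ax : adj (E :\ [set x; a]) b a by rewrite /adj setUC (edge_setD1 ab_E (set22 a b) b_xa).
exact: connect_trans (connect1 x_b) (connect1 b_ax).
Qed.

Lemma suppress_edge : {in E', forall e, e != [set a; b] -> e \in E /\ x \notin e}.
Proof. by move=> e; rewrite !inE => /orP [/andP [] | ->]. Qed.

Lemma suppress_connect e p q : e \in E -> x \notin e -> p != x -> q != x ->
  connect (adj (E' :\ e)) p q = connect (adj (E :\ e)) p q.
Proof.
move=> eE xe px qx.
have ab_e : [set a; b] != e by apply: contraNneq suppress_new_edge => ->.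
have x_e y : [set x; y] \in E -> adj (E :\ e) y x.
  by move=> xyE; rewrite /adj setUC (edge_setD1 xyE (set21 x y)).
apply/idP/idP.
  apply: connect_sub => c d; rewrite /adj !inE => /andP [cde /orP [/andP [cdE _] | /eqP cd_ab]].
    by apply: connect1; rewrite /adj !inE cde cdE.
  have a_b : connect (adj (E :\ e)) a b.
    by apply: connect_trans (connect1 (x_e _ xa_E)) _; rewrite connect1 // adjC x_e.
  by case: (set2_inj cd_ab) => [[-> ->] | [-> ->]]; rewrite // connect_adjC.
have off c d : adj (E :\ e) c d -> c != x -> d != x -> connect (adj (E' :\ e)) c d.
  rewrite /adj !inE => /andP [cde cdE] cx dx; apply: connect1.
  by rewrite /adj !inE cde cdE negb_or !(eq_sym x) cx dx.
have at_x z : adj (E :\ e) x z -> z != x -> connect (adj (E' :\ e)) a z.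
  rewrite /adj inE (deg2P deg_x neq_ab xa_E xb_E) => /andP [_ /orP [] /eqP -> _] //.
  by apply: connect1; rewrite /adj !inE ab_e eqxx orbT.
by move/(connect_bypass off at_x); rewrite (negbTE px) (negbTE qx).
Qed.

Lemma suppress_connect_xa p q : connect (adj (E :\ [set x; a])) p q ->
  connect (adj (E' :\ [set a; b])) (if p == x then b else p) (if q == x then b else q).
Proof.
apply: connect_bypass.
- move=> c d; rewrite /adj !inE => /andP [_ cdE] cx dx; apply: connect1.
  rewrite /adj !inE cdE negb_or !(eq_sym x) cx dx /= andbT.
  by apply: contraNneq suppress_new_edge => <-.
- move=> z; rewrite /adj !inE (deg2P deg_x neq_ab xa_E xb_E).
  by case/andP => ne /orP [] /eqP zE _; subst z; rewrite ?eqxx in ne.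
Qed.

Lemma suppress_edge_sub : E' :\ [set a; b] \subset E :\ [set x; a].
Proof.
apply/subsetP => e; rewrite !inE => /andP [ne /orP [/andP [eE xe] | /eqP eab]].
  by rewrite eE andbT; apply: contraNneq xe => ->; rewrite set21.
by rewrite eab eqxx in ne.
Qed.

Lemma suppress_sides :
  side E' Lp [set a; b] a = side E Lp [set x; a] a /\
  side E' Lp [set a; b] b = side E Lp [set x; a] x.
Proof.
have Lx z : Lp z != x by apply: contraNneq suppress_unlabelled => <-.
split; apply/setP => z; rewrite !inE; apply/idP/idP.
- exact: connect_adjS suppress_edge_sub _ _.
- by move/suppress_connect_xa; rewrite eq_sym (negbTE neq_xa) (negbTE (Lx z)).
- by move/(connect_adjS suppress_edge_sub); apply: connect_trans; apply: connect1.
- by move/suppress_connect_xa; rewrite eqxx (negbTE (Lx z)).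
Qed.

Lemma suppress_card2 : {in E', forall e, #|e| = 2}.
Proof.
move=> e eE'; have [-> | /(suppress_edge eE') [eE _]] := eqVneq e [set a; b]; last exact: E2.
by rewrite cards2 neq_ab.
Qed.

Lemma suppress_bridge c d : [set c; d] \in E' -> ~~ connect (adj (E' :\ [set c; d])) c d.
Proof.
move=> cdE'; have [cd_ab | /(suppress_edge cdE') [cdE xcd]] := eqVneq [set c; d] [set a; b].
  rewrite cd_ab; apply: contra (E_bridge xa_E) => /(connect_adjS suppress_edge_sub) cd.
  have a_b : connect (adj (E :\ [set x; a])) a b.
    by move: cd; case: (set2_inj cd_ab) => [[-> ->] | [-> ->]]; rewrite // connect_adjC.
  by rewrite connect_adjC; apply: connect_trans a_b (connect1 _); rewrite adjC.
have [cx dx] : c != x /\ d != x by move: xcd; rewrite !inE negb_or !(eq_sym x) => /andP.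
by rewrite suppress_connect // E_bridge.
Qed.

Lemma suppress_lab n m1 m2 : lab n -> [set n; m1] \in E' -> [set n; m2] \in E' -> m1 = m2.
Proof.
move=> ln nm1 nm2.
have old_edge m : [set n; m] \in E' -> [set n; m] != [set a; b] -> n \notin [set a; b].
  move=> nmE' /(suppress_edge nmE') [nmE xnm]; apply/set2P => -[] ?; subst n.
    by move: xnm; rewrite (E_lab ln nmE (_ : [set a; x] \in E)) ?set22 // setUC.
  by move: xnm; rewrite (E_lab ln nmE (_ : [set b; x] \in E)) ?set22 // setUC.
have [e1 | ne1] := eqVneq [set n; m1] [set a; b];
  have [e2 | ne2] := eqVneq [set n; m2] [set a; b].
- by apply: (@set2_injr _ n); rewrite e1 e2.
- by move: (old_edge _ nm2 ne2); rewrite -e1 set21.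
- by move: (old_edge _ nm1 ne1); rewrite -e2 set21.
- have [h1 _] := suppress_edge nm1 ne1; have [h2 _] := suppress_edge nm2 ne2.
  exact: E_lab ln h1 h2.
Qed.

Lemma suppress_embedding (phi : {set M} -> {set M}) :
  {in E, forall e, phi e \in E0} -> {in E &, injective phi} ->
  (forall e, e \in E -> forall c, c \in e ->
     exists2 c0, c0 \in phi e & side E Lp e c = side E0 Lp (phi e) c0) ->
  exists phi' : {set M} -> {set M},
    [/\ {in E', forall e, phi' e \in E0}, {in E' &, injective phi'} &
        forall e, e \in E' -> forall c, c \in e ->
          exists2 c0, c0 \in phi' e & side E' Lp e c = side E0 Lp (phi' e) c0].
Proof.
move=> phiE phi_inj phi_side.
exists (fun e => if e == [set a; b] then phi [set x; a] else phi e); split.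
- move=> e eE'; case: eqP => [_ | /eqP ne]; first exact: phiE.
  by apply: phiE; case: (suppress_edge eE' ne).
- have off_xa e : e \in E' -> e != [set a; b] -> phi e != phi [set x; a].
    move=> eE' ne; have [eE xe] := suppress_edge eE' ne.
    by apply: contraNneq xe => /phi_inj -> //; rewrite set21.
  move=> e1 e2 h1 h2 /=.
  case: eqP => [-> | /eqP n1]; case: eqP => [-> // | /eqP n2] eq_phi.
  + by case/eqP: (off_xa _ h2 n2).
  + by case/eqP: (off_xa _ h1 n1).
  + by apply: phi_inj => //; [case: (suppress_edge h1 n1) | case: (suppress_edge h2 n2)].
move=> e eE' c ce; case: eqP => [e_ab | /eqP ne].
  subst e; have [side_a side_b] := suppress_sides.
  by case/set2P: ce => ->; [rewrite side_a; apply: phi_side; rewrite ?set22 |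
                            rewrite side_b; apply: phi_side; rewrite ?set21].
have [eE xe] := suppress_edge eE' ne.
have cx : c != x by apply: contraNneq xe => <-.
have Lx z : Lp z != x by apply: contraNneq suppress_unlabelled => <-.
have -> : side E' Lp e c = side E Lp e c by apply/setP => z; rewrite !inE suppress_connect.
exact: phi_side.
Qed.

End Suppress.

Lemma reduction_inv_suppress E x a b : reduction_inv E -> deg E x = 2 -> a != b ->
  [set x; a] \in E -> [set x; b] \in E ->
  reduction_inv ([set e in E | x \notin e] :|: [set [set a; b]]).
Proof.
move=> [E2 E_bridge E_lab [phi [phiE phi_inj phi_side]]] dx ab xa xb; split.
- exact: suppress_card2 E2 ab.
- exact: suppress_bridge E2 E_bridge dx ab xa xb.
- exact: suppress_lab E_lab xa xb.
- exact: (suppress_embedding E2 E_bridge E_lab dx ab xa xb phiE phi_inj phi_side).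
Qed.

Lemma reduction_inv_width (f : {set V} -> nat) E k :
  {in E0, forall e0, ewidth f E0 Lp e0 <= k} -> reduction_inv E ->
  width f E Lp <= k /\ nwide f E Lp k <= nwide f E0 Lp k.
Proof.
move=> E0k [_ _ _ [phi [phiE phi_inj phi_side]]].
have ew_le e : e \in E -> ewidth f E Lp e <= ewidth f E0 Lp (phi e).
  move=> eE; apply/bigmax_leqP => c ce; have [c0 c0e ->] := phi_side e eE c ce.
  by rewrite /ewidth (bigD1 c0) //= leq_maxl.
split; first by apply/bigmax_leqP => e eE; apply: leq_trans (ew_le e eE) (E0k _ (phiE e eE)).
rewrite /nwide -(card_in_imset (f := phi)); last first.
  by move=> e1 e2; rewrite !inE => /andP [h1 _] /andP [h2 _]; apply: phi_inj.
apply/subset_leq_card/subsetP => _ /imsetP [e /[!inE] /andP [eE /eqP ew] ->].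
by rewrite phiE //= eqn_leq E0k ?phiE //= -ew ew_le.
Qed.

End Reduction.

Lemma reduction_inv_star (N V : finType) (Lp : V -> rnode N) (lab : pred (rnode N))
    (E0 : {set {set rnode N}}) s1 s2 : (forall z, lab (Lp z)) -> red_star lab s1 s2 ->
  reduction_inv Lp lab E0 s1.2 -> reduction_inv Lp lab E0 s2.2.
Proof.
move=> lab_Lp; elim=> // {}s1 {}s2 s3 step _ IH inv1; apply: IH; case: step inv1 => /=.
- by move=> x S E _ nlx dx /reduction_inv_delete; apply.
- by move=> x a b S E _ dx ab xa xb /reduction_inv_suppress; apply.
Qed.

Lemma tripartitionP (V : finType) (A B C : {set V}) :
  tripartition A B C <-> forall z, (z \in A) + (z \in B) + (z \in C) = 1.
Proof.
split => [[dAB dAC dBC ABC] z | one].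
  have : z \in A :|: B :|: C by rewrite ABC inE.
  rewrite !inE; case zA: (z \in A); case zB: (z \in B); case zC: (z \in C) => //= _.
  - by rewrite (disjointFr dAB zA) in zB.
  - by rewrite (disjointFr dAB zA) in zB.
  - by rewrite (disjointFr dAC zA) in zC.
  - by rewrite (disjointFr dBC zB) in zC.
have dis (D1 D2 : {set V}) : (forall z, (z \in D1) + (z \in D2) <= 1) -> [disjoint D1 & D2].
  move=> le1; rewrite -setI_eq0; apply/eqP/setP => z; rewrite !inE.
  by have := le1 z; case: (z \in D1); case: (z \in D2).
split; try by apply: dis => z; have := one z; lia.
by apply/setP => z; rewrite !inE; have := one z; case: (z \in A); case: (z \in B); case: (z \in C).
Qed.

Section Connectivity.
Variables (V : finType) (f : {set V} -> nat).
Hypothesis f_conn : connectivity_function f.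
Implicit Types (A B C P Q W X Y : {set V}).

Lemma connfC X : f (~: X) = f X. Proof. by case: f_conn. Qed.
Lemma connf_submod X Y : f (X :|: Y) + f (X :&: Y) <= f X + f Y. Proof. by case: f_conn. Qed.

Lemma connf_posimod X Y : f (X :\: Y) + f (Y :\: X) <= f X + f Y.
Proof.
have := connf_submod X (~: Y).
by rewrite -setDE -[X :|: _]setCK setCU setCK setIC -setDE !connfC addnC.
Qed.

Lemma connf_setD_le X Y : f X <= f (X :\: Y) -> f (Y :\: X) <= f Y.
Proof. by have := connf_posimod Y X; lia. Qed.

(* Uncrossing (X u P) and (X u Q), whose intersection is X. *)
Lemma connf_disjoint_traces P Q X : [disjoint P & Q] ->
  f (X :&: P) + f (X :&: Q) <= f X + f P + f Q.
Proof.
move=> dPQ; have := connf_submod (X :|: P) (X :|: Q).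
rewrite -setUIr (disjoint_setI0 dPQ) setU0.
by have := connf_submod X P; have := connf_submod X Q; lia.
Qed.

Definition small_part W C := [/\ (f C).*2 < f W, f (C :&: W) < f W & f (C :\: W) < f W].

Definition part_cost A B C := f A + f B + f C.

Definition bounded_traces W A B C := [forall X : {set V}, ((X \subset W) || (X \subset ~: W)) ==>
  [&& f (X :&: A) <= f X, f (X :&: B) <= f X & f (X :&: C) <= f X]].

Lemma improvementP W A B C : improvement f W A B C <->
  [/\ tripartition A B C, small_part W A, small_part W B & small_part W C].
Proof.
split => [[trip small] | [trip sA sB sC]].
  by split=> //; apply: small; rewrite !inE eqxx ?orbT.
by split=> // D; rewrite !inE => /or3P [] /eqP ->.
Qed.

Lemma improvement_perm12 W A B C : improvement f W A B C -> improvement f W B A C.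
Proof.
case/improvementP => /tripartitionP trip sA sB sC; apply/improvementP; split=> //.
by apply/tripartitionP => z; have := trip z; lia.
Qed.

Lemma improvement_perm13 W A B C : improvement f W A B C -> improvement f W C B A.
Proof.
case/improvementP => /tripartitionP trip sA sB sC; apply/improvementP; split=> //.
by apply/tripartitionP => z; have := trip z; lia.
Qed.

Lemma improvement_setC W A B C : improvement f W A B C -> improvement f (~: W) A B C.
Proof.
have smallC P : small_part W P -> small_part (~: W) P.
  case=> h1 h2 h3; split; rewrite connfC //; first by rewrite -setDE.
  by rewrite setDE setCK.
by case/improvementP => trip sA sB sC; apply/improvementP; split; try apply: smallC.
Qed.

Lemma small_part_setU W A X : X \subset W -> f X < f (X :&: A) ->
  small_part W A -> small_part W (A :|: X) /\ f (A :|: X) < f A.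
Proof.
move=> sXW ltX [A2 AW AnW].
have XW0 : X :\: W = set0 by apply/eqP; rewrite setD_eq0.
have ltA : f (A :|: X) < f A by have := connf_submod A X; rewrite [A :&: X]setIC; lia.
do !split=> //.
- by rewrite -!muln2 in A2 *; lia.
- rewrite setIUl (setIidPl sXW).
  by have := connf_submod (A :&: W) X; rewrite -setIA (setIidPr sXW) [A :&: X]setIC; lia.
- by rewrite setDUl XW0 setU0.
Qed.

Lemma small_part_setD W B X : X \subset W -> f X <= f (X :\: B) ->
  small_part W B -> small_part W (B :\: X) /\ f (B :\: X) <= f B.
Proof.
move=> sXW leX [B2 BW BnW].
have XW0 : X :\: W = set0 by apply/eqP; rewrite setD_eq0.
have leB := connf_setD_le leX.
do !split=> //.
- by rewrite -!muln2 in B2 *; lia.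
- rewrite setIDAC; apply: leq_ltn_trans BW; apply: connf_setD_le.
  by rewrite setDIr XW0 setU0.
- by rewrite setDDl (setUidPr sXW).
Qed.

Lemma improvement_absorb W A B C X : improvement f W A B C -> X \subset W ->
  f X < f (X :&: A) -> f X <= f (X :\: B) -> f X <= f (X :\: C) ->
  improvement f W (A :|: X) (B :\: X) (C :\: X) /\
  part_cost (A :|: X) (B :\: X) (C :\: X) < part_cost A B C.
Proof.
case/improvementP => /tripartitionP trip sA sB sC sXW ltA leB leC.
have [sAX ltAX] := small_part_setU sXW ltA sA.
have [sBX leBX] := small_part_setD sXW leB sB.
have [sCX leCX] := small_part_setD sXW leC sC.
split; last by rewrite /part_cost; lia.
apply/improvementP; split=> //; apply/tripartitionP => z.
have := trip z; have := subsetP sXW z; rewrite !inE.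
by case: (z \in A); case: (z \in B); case: (z \in C); case: (z \in X) => //= /(_ isT).
Qed.

(* Shrink X by B or by C while this lowers f X, then move X into A. *)
Lemma improvement_cheaper_of_trace W A B C X : improvement f W A B C -> X \subset W ->
  f X < f (X :&: A) ->
  exists D1 D2 D3, improvement f W D1 D2 D3 /\ part_cost D1 D2 D3 < part_cost A B C.
Proof.
move=> imp; have /improvementP [[dAB dAC _ _] _ _ _] := imp.
have trace_setD (D Y : {set V}) : [disjoint A & D] -> (Y :\: D) :&: A = Y :&: A.
  by move=> dAD; rewrite setIDAC -setIDA (setDidPl dAD).
have [n lt_n] := ubnP (f X); elim: n X lt_n => // n IHn X lt_n sXW ltA.
have sXDW D : X :\: D \subset W := subset_trans (subsetDl X D) sXW.
have [ltB | leB] := ltnP (f (X :\: B)) (f X).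
  by apply: (IHn (X :\: B)); [lia | apply: sXDW | rewrite trace_setD //; lia].
have [ltC | leC] := ltnP (f (X :\: C)) (f X).
  by apply: (IHn (X :\: C)); [lia | apply: sXDW | rewrite trace_setD //; lia].
have [impX ltX] := improvement_absorb imp sXW ltA leB leC.
by exists (A :|: X), (B :\: X), (C :\: X).
Qed.

Lemma improvement_cheaper W A B C : improvement f W A B C -> ~~ bounded_traces W A B C ->
  exists D1 D2 D3, improvement f W D1 D2 D3 /\ part_cost D1 D2 D3 < part_cost A B C.
Proof.
move=> imp /forallPn [X]; rewrite negb_imply !negb_and -!ltnNge => /andP [sX viol].
have cheaper W' : improvement f W' A B C -> X \subset W' ->
    exists D1 D2 D3, improvement f W' D1 D2 D3 /\ part_cost D1 D2 D3 < part_cost A B C.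
  move=> impW' sXW'; case/or3P: viol => lt.
  - exact: improvement_cheaper_of_trace impW' sXW' lt.
  - have [D1 [D2 [D3 [impD ltD]]]] :=
      improvement_cheaper_of_trace (improvement_perm12 impW') sXW' lt.
    by exists D1, D2, D3; split => //; rewrite /part_cost in ltD *; lia.
  - have [D1 [D2 [D3 [impD ltD]]]] :=
      improvement_cheaper_of_trace (improvement_perm13 impW') sXW' lt.
    by exists D1, D2, D3; split => //; rewrite /part_cost in ltD *; lia.
case/orP: sX => [sXW | /(cheaper _ (improvement_setC imp))]; first exact: cheaper imp sXW.
case=> D1 [D2 [D3 [impD ltD]]]; exists D1, D2, D3; split=> //.
by rewrite -[W]setCK; apply: improvement_setC.
Qed.

Lemma improvement_bounded_traces W A B C : improvement f W A B C ->
  exists D1 D2 D3, improvement f W D1 D2 D3 /\ bounded_traces W D1 D2 D3.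
Proof.
move=> imp; have [n lt_n] := ubnP (part_cost A B C).
elim: n A B C lt_n imp => // n IHn A B C lt_n imp.
have [bt | nbt] := boolP (bounded_traces W A B C); first by exists A, B, C.
have [D1 [D2 [D3 [impD ltD]]]] := improvement_cheaper imp nbt.
by apply: IHn impD; lia.
Qed.

Lemma bounded_tracesP W A B C X : bounded_traces W A B C ->
  (X \subset W) || (X \subset ~: W) ->
  [/\ f (X :&: A) <= f X, f (X :&: B) <= f X & f (X :&: C) <= f X].
Proof. by move=> /forallP /(_ X) /implyP bt /bt /and3P. Qed.

End Connectivity.

Section BranchDecomposition.
Variables (N V : finType) (E : {set {set N}}) (L : V -> N).
Hypothesis bd : is_branch_decomp E L.
Implicit Types (c d u v : N).

Lemma bd_card2 : {in E, forall e : {set N}, #|e| = 2}.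
Proof. by case: bd => [[]]. Qed.

Lemma bd_connect x y : connect (adj E) x y.
Proof. by case: bd => [[]]. Qed.

Lemma bd_bridge c d : [set c; d] \in E -> ~~ connect (adj (E :\ [set c; d])) c d.
Proof. by case: bd => [[_ _ bridge]] _ _ _ cdE; apply: bridge cdE erefl. Qed.

Lemma bd_leaf z : exists y, forall m, ([set L z; m] \in E) = (m == y).
Proof. by case: bd => _ _ _ leaf; apply/deg1P/leaf; exists z. Qed.

Lemma bd_side_compl c d : [set c; d] \in E ->
  side E L [set c; d] d = ~: side E L [set c; d] c.
Proof. by move/bd_bridge; exact: (side_compl L bd_connect). Qed.

Lemma bd_ewidth (f : {set V} -> nat) c d : (forall X, f (~: X) = f X) ->
  [set c; d] \in E -> ewidth f E L [set c; d] = f (side E L [set c; d] c).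
Proof. by move=> fC /bd_bridge; exact: (ewidth_bridge L bd_connect fC). Qed.

Lemma bd_far u c d : [set c; d] \in E ->
  ~~ connect (adj (E :\ [set c; d])) c u \/ ~~ connect (adj (E :\ [set c; d])) d u.
Proof.
move/bd_bridge => ncd; apply/orP; rewrite -negb_and; apply: contra ncd => /andP [cu du].
by apply: connect_trans cu _; rewrite connect_adjC.
Qed.

Lemma side_nested u v c d : [set u; v] \in E -> [set c; d] \in E ->
  [set c; d] != [set u; v] -> ~~ connect (adj (E :\ [set c; d])) c u ->
  (side E L [set c; d] c \subset side E L [set u; v] u) \/
  (side E L [set c; d] c \subset ~: side E L [set u; v] u).
Proof.
move=> uvE cdE ne ncu.
have ncv : ~~ connect (adj (E :\ [set c; d])) c v.
  apply: contra ncu => cv; apply: connect_trans cv (connect1 _).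
  by rewrite /adj setUC !inE uvE eq_sym ne.
have to_uv z : z \in side E L [set c; d] c -> connect (adj (E :\ [set u; v])) c (L z).
  rewrite inE => /(connect_split_edge [set u; v]) [cz | [[y /set2P [] -> cy] _]].
  - by apply: connect_adjS cz; apply: setSD; apply: subsetDl.
  - by case/negP: ncu; apply: connect_adjS cy; apply: subsetDl.
  - by case/negP: ncv; apply: connect_adjS cy; apply: subsetDl.
have [uc | vc] := connect_edge_ends bd_connect u v c; [left | right];
  apply/subsetP => z /to_uv cz; first by rewrite inE (connect_trans uc cz).
by rewrite -bd_side_compl // inE (connect_trans vc cz).
Qed.

End BranchDecomposition.

Definition part_index (V : finType) (C1 C2 : {set V}) (z : V) : 'I_3 :=
  if z \in C1 then i0 else if z \in C2 then i1 else i2.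

Definition tpart (V : finType) (C1 C2 C3 : {set V}) (i : 'I_3) : {set V} :=
  if i == i0 then C1 else if i == i1 then C2 else C3.

Lemma ord3P (i : 'I_3) : [\/ i = i0, i = i1 | i = i2].
Proof.
by case: i => [[|[|[|m]]] // ?]; [constructor 1 | constructor 2 | constructor 3]; apply/val_inj.
Qed.

Lemma part_indexP (V : finType) (C1 C2 C3 : {set V}) z i : tripartition C1 C2 C3 ->
  (part_index C1 C2 z == i) = (z \in tpart C1 C2 C3 i).
Proof.
move/tripartitionP/(_ z); rewrite /part_index /tpart.
by case: (ord3P i) => ->; case: (z \in C1); case: (z \in C2); case: (z \in C3).
Qed.

Section Refinement.
Variables (N V : finType) (E : {set {set N}}) (L : V -> N) (u v : N).
Hypotheses (bd : is_branch_decomp E L) (uv_E : [set u; v] \in E).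
Implicit Types (a b c d n : N) (i j : 'I_3).
Local Notation M := (rnode N).
Local Notation E0 := (refine_edges E u v).

Lemma rcopy_eq i j a b : (rcopy i a == rcopy j b :> M) = (i == j) && (a == b).
Proof. by rewrite /rcopy -[inl _ == inl _]/((a, i) == (b, j)) xpair_eqE andbC. Qed.

Lemma imset_rcopy2 i c d : rcopy i @: [set c; d] = [set rcopy i c; rcopy i d] :> {set M}.
Proof. by rewrite imsetU1 imset_set1. Qed.

Variant refine_edge_spec (e0 : {set M}) : Prop :=
  | RefineCopy i c d of [set c; d] \in E & [set c; d] != [set u; v] &
      e0 = [set rcopy i c; rcopy i d]
  | RefineUW i of e0 = [set rcopy i u; rw N i]
  | RefineWV i of e0 = [set rw N i; rcopy i v]
  | RefineWT i of e0 = [set rw N i; rt N].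

Lemma refine_edgeP e0 : e0 \in E0 -> refine_edge_spec e0.
Proof.
case/bigcupP => i _; rewrite !inE -!orbA.
case/or4P => [/imsetP [e /setD1P [ne eE] ->] | /eqP/RefineUW | /eqP/RefineWV | /eqP/RefineWT] //.
have /eqP/cards2P [c [d [_ ecd]]] := bd_card2 bd eE; subst e.
by apply: (RefineCopy (i := i) eE ne); rewrite imset_rcopy2.
Qed.

Lemma refine_edge_copy i c d : [set c; d] \in E -> [set c; d] != [set u; v] ->
  [set rcopy i c; rcopy i d] \in E0.
Proof.
move=> cdE ne; apply/bigcupP; exists i => //; rewrite inE; apply/orP; left.
by apply/imsetP; exists [set c; d]; rewrite ?imset_rcopy2 // !inE ne cdE.
Qed.

Lemma refine_edge_uw i : [set rcopy i u; rw N i] \in E0.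
Proof. by apply/bigcupP; exists i => //; rewrite !inE eqxx /= orbT. Qed.

Lemma refine_edge_wv i : [set rw N i; rcopy i v] \in E0.
Proof. by apply/bigcupP; exists i => //; rewrite !inE eqxx /= !orbT. Qed.

Lemma refine_edge_wt i : [set rw N i; rt N] \in E0.
Proof. by apply/bigcupP; exists i => //; rewrite !inE eqxx /= !orbT. Qed.

Lemma refine_edge_card2 : {in E0, forall e0 : {set M}, #|e0| = 2}.
Proof.
move=> e0 /refine_edgeP [i c d cdE _ | i | i | i] ->; rewrite cards2 //.
by rewrite rcopy_eq eqxx /= (edge_neq (bd_card2 bd) cdE).
Qed.

Lemma refine_edge_ind (Q : M -> M -> Prop) :
  (forall p q, Q p q -> Q q p) ->
  (forall i c d, [set c; d] \in E -> [set c; d] != [set u; v] -> Q (rcopy i c) (rcopy i d)) ->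
  (forall i, Q (rcopy i u) (rw N i)) -> (forall i, Q (rw N i) (rcopy i v)) ->
  (forall i, Q (rw N i) (rt N)) ->
  forall p q, [set p; q] \in E0 -> Q p q.
Proof.
move=> Qsym Qc Quw Qwv Qwt p q /refine_edgeP [i c d cdE ne | i | i | i] /set2_inj;
  by case=> -[-> ->]; auto.
Qed.

Lemma refine_connect_copy i a b :
  connect (adj E) a b -> connect (adj E0) (rcopy i a) (rcopy i b).
Proof.
apply: connect_map => c d cdE.
have [e | ne] := eqVneq [set c; d] [set u; v]; last exact/connect1/refine_edge_copy.
have u_v : connect (adj E0) (rcopy i u) (rcopy i v).
  apply: (connect_trans (y := rw N i)); apply: connect1; first exact: refine_edge_uw.
  exact: refine_edge_wv.
by case: (set2_inj e) => -[-> ->]; rewrite // connect_adjC.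
Qed.

Lemma refine_connected p q : connect (adj E0) p q.
Proof.
suff to_t x : connect (adj E0) x (rt N).
  by apply: connect_trans (to_t p) _; rewrite connect_adjC.
have w_t i : connect (adj E0) (rw N i) (rt N) by apply/connect1/refine_edge_wt.
case: x => [[n i] | [i | ]] //; last exact: w_t.
apply: connect_trans (refine_connect_copy i (bd_connect bd n u)) _.
exact: connect_trans (connect1 (refine_edge_uw i)) (w_t i).
Qed.

Lemma refine_closed e0 (rho : pred M) :
  (forall i c d, [set c; d] \in E -> [set c; d] != [set u; v] ->
     [set rcopy i c; rcopy i d] != e0 -> rho (rcopy i c) = rho (rcopy i d)) ->
  (forall i, [set rcopy i u; rw N i] != e0 -> rho (rcopy i u) = rho (rw N i)) ->
  (forall i, [set rw N i; rcopy i v] != e0 -> rho (rw N i) = rho (rcopy i v)) ->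
  (forall i, [set rw N i; rt N] != e0 -> rho (rw N i) = rho (rt N)) ->
  closed (adj (E0 :\ e0)) rho.
Proof.
move=> Hc Huw Hwv Hwt p q; rewrite /adj !inE => /andP [ne pqE].
have Qsym p' q' : ([set p'; q'] != e0 -> rho p' = rho q') ->
    [set q'; p'] != e0 -> rho q' = rho p'.
  by move=> Qpq; rewrite setUC => /Qpq ->.
exact: (@refine_edge_ind (fun p q => [set p; q] != e0 -> rho p = rho q)
  Qsym Hc Huw Hwv Hwt p q pqE ne).
Qed.

(* Node colourings constant across all edges of the refinement but one; through
   [closed_side] they give that edge's sides. *)
Definition branch i : pred M := fun p =>
  match p with inl (_, j) | inr (Some j) => j == i | inr None => false end.

Definition copy_component i (F : {set {set N}}) a : pred M := fun p =>
  if p is inl (n, j) then (j == i) && connect (adj F) a n else false.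

Lemma refine_closed_wt i : closed (adj (E0 :\ [set rw N i; rt N])) (branch i).
Proof.
apply: refine_closed => // j ne /=; apply/negbTE.
by apply: contraNneq ne => ->.
Qed.

Lemma refine_closed_uw i a b : [set a; b] = [set u; v] ->
  closed (adj (E0 :\ [set rcopy i a; rw N i])) (copy_component i (E :\ [set u; v]) a).
Proof.
move=> ab_uv; have nab : ~~ connect (adj (E :\ [set u; v])) a b.
  by case: (set2_inj ab_uv) => -[-> ->]; last rewrite connect_adjC; apply: (bd_bridge bd uv_E).
have other x j : x \in [set a; b] -> [set rcopy j x; rw N j] != [set rcopy i a; rw N i] ->
    copy_component i (E :\ [set u; v]) a (rcopy j x) = false.
  move=> /set2P [] -> ne /=; last by rewrite (negbTE nab) andbF.
  by apply/negbTE; apply: contraNN ne => /andP [/eqP ->].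
apply: refine_closed => [j c d cdE ne _ /= | j ne | j ne | //].
- by congr (_ && _); apply: connect_adj_r; rewrite /adj !inE ne cdE.
- by rewrite other // ab_uv set21.
- by rewrite other ?ab_uv ?set22 // setUC.
Qed.

Lemma refine_closed_copy i c d : [set c; d] \in E -> [set c; d] != [set u; v] ->
  ~~ connect (adj (E :\ [set c; d])) c u ->
  closed (adj (E0 :\ [set rcopy i c; rcopy i d])) (copy_component i (E :\ [set c; d]) c).
Proof.
move=> cdE ne ncu.
have ncv : ~~ connect (adj (E :\ [set c; d])) c v.
  apply: contra ncu => cv; apply: connect_trans cv (connect1 _).
  by rewrite /adj setUC !inE uv_E eq_sym ne.
apply: refine_closed => [j c' d' cdE' _ | j _ | j _ | //] /=.
- case: (eqVneq j i) => [-> ne0 | //] /=; apply: connect_adj_r; rewrite /adj !inE cdE' andbT.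
  by apply: contraNneq ne0 => e; rewrite -!imset_rcopy2 e.
- by rewrite (negbTE ncu) andbF.
- by rewrite (negbTE ncv) andbF.
Qed.

Lemma refine_bridge (p q : M) : [set p; q] \in E0 -> ~~ connect (adj (E0 :\ [set p; q])) p q.
Proof.
move: p q; apply: refine_edge_ind => [p q | i c d cdE ne | i | i | i].
- by rewrite setUC connect_adjC.
- have [ncu | ndu] := bd_far bd u cdE.
    by apply: (closed_bridge (refine_closed_copy (i := i) cdE ne ncu));
      rewrite /= ?eqxx /= ?(bd_bridge bd cdE).
  rewrite setUC connect_adjC; rewrite setUC in cdE ne ndu.
  by apply: (closed_bridge (refine_closed_copy (i := i) cdE ne ndu));
    rewrite /= ?eqxx /= ?(bd_bridge bd cdE).
- by apply: (closed_bridge (refine_closed_uw (i := i) (erefl _))); rewrite /= ?eqxx /=.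
- rewrite setUC connect_adjC.
  by apply: (closed_bridge (refine_closed_uw (i := i) (setUC _ _))); rewrite /= ?eqxx /=.
- by apply: (closed_bridge (refine_closed_wt (i := i))); rewrite /= ?eqxx /=.
Qed.

Lemma refine_adj_copy i n m : [set rcopy i n; m] \in E0 ->
  exists2 y, [set n; y] \in E & m = if [set n; y] == [set u; v] then rw N i else rcopy i y.
Proof.
case/refine_edgeP => [j c d cdE ne | j | j | j] /set2_inj [] [] // /eqP;
  rewrite rcopy_eq => /andP [/eqP -> /eqP ->] ->.
- by exists d; rewrite // (negbTE ne).
- by exists c; rewrite setUC // (negbTE ne).
- by exists v; rewrite // eqxx.
- by exists u; rewrite setUC // eqxx.
Qed.

Lemma refine_reduction_inv (C1 C2 : {set V}) :
  reduction_inv (refine_lab L C1 C2) [pred n | n \in codom (refine_lab L C1 C2)] E0 E0.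
Proof.
split.
- exact: refine_edge_card2.
- exact: refine_bridge.
- move=> _ m1 m2 /codomP [z ->]; have [y yE] := bd_leaf bd z.
  move=> /refine_adj_copy [y1 + ->] /refine_adj_copy [y2 + ->].
  by rewrite !yE => /eqP -> /eqP ->.
- by exists id; split=> // e _ a ae; exists a.
Qed.

Section Labels.
Variables (C1 C2 C3 : {set V}) (f : {set V} -> nat).
Hypotheses (trip : tripartition C1 C2 C3) (fC : forall X, f (~: X) = f X).
Local Notation Lp := (refine_lab L C1 C2).
Local Notation C := (tpart C1 C2 C3).

Lemma refine_ewidth_copy i c d : [set c; d] \in E -> [set c; d] != [set u; v] ->
  ~~ connect (adj (E :\ [set c; d])) c u ->
  ewidth f E0 Lp [set rcopy i c; rcopy i d] = f (C i :&: side E L [set c; d] c).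
Proof.
move=> cdE ne ncu; set F := E :\ [set c; d].
have rc : copy_component i F c (rcopy i c) by rewrite /= eqxx /=.
have nrd : ~~ copy_component i F c (rcopy i d) by rewrite /= eqxx /= (bd_bridge bd cdE).
rewrite (closed_ewidth Lp refine_connected fC (refine_closed_copy (i := i) cdE ne ncu) rc nrd).
by congr f; apply/setP => z; rewrite !inE /= (part_indexP _ _ trip).
Qed.

Lemma refine_ewidth_uw i a b : [set a; b] = [set u; v] ->
  ewidth f E0 Lp [set rcopy i a; rw N i] = f (C i :&: side E L [set u; v] a).
Proof.
move=> ab_uv; set F := E :\ [set u; v].
have rc : copy_component i F a (rcopy i a) by rewrite /= eqxx /=.
rewrite (closed_ewidth Lp refine_connected fC (refine_closed_uw (i := i) ab_uv) rc isT).
by congr f; apply/setP => z; rewrite !inE /= (part_indexP _ _ trip).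
Qed.

Lemma refine_ewidth_wt i : ewidth f E0 Lp [set rw N i; rt N] = f (C i).
Proof.
have rc : branch i (rw N i) by rewrite /= eqxx.
rewrite (closed_ewidth Lp refine_connected fC (refine_closed_wt (i := i)) rc isT).
by congr f; apply/setP => z; rewrite !inE /= (part_indexP _ _ trip).
Qed.

End Labels.
End Refinement.

Section RefinementWidth.
Variables (N V : finType) (f : {set V} -> nat) (E : {set {set N}}) (L : V -> N).
Variables (u v : N) (k : nat) (C1 C2 C3 : {set V}).
Implicit Types (i j : 'I_3) (c d : N) (X : {set V}).
Local Notation W := (side E L [set u; v] u).
Local Notation E0 := (refine_edges E u v).
Local Notation Lp := (refine_lab L C1 C2).
Local Notation C := (tpart C1 C2 C3).
Hypotheses (f_conn : connectivity_function f) (bd : is_branch_decomp E L)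
  (uv_E : [set u; v] \in E) (E_width : {in E, forall e, ewidth f E L e <= k})
  (fW : f W = k) (imp : improvement f W C1 C2 C3) (bt : bounded_traces f W C1 C2 C3).

Let fC : forall X, f (~: X) = f X := connfC f_conn.
Let trip : tripartition C1 C2 C3. Proof. by case/improvementP: imp. Qed.

Lemma tpart_small i : small_part f W (C i).
Proof. by case/improvementP: imp => _ *; rewrite /tpart; case: (ord3P i) => ->. Qed.

Lemma tpart_trace i X : (X \subset W) || (X \subset ~: W) -> f (X :&: C i) <= f X.
Proof. by move/(bounded_tracesP bt) => [*]; rewrite /tpart; case: (ord3P i) => ->. Qed.

Lemma tpart_disjoint i j : i != j -> [disjoint C i & C j].
Proof.
move=> ij; rewrite -setI_eq0; apply/eqP/setP => z; rewrite !inE -!(part_indexP _ _ trip).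
by apply/negP => /andP [/eqP -> /eqP ji]; rewrite ji eqxx in ij.
Qed.

Lemma copy_trace_le i c d : [set c; d] \in E -> [set c; d] != [set u; v] ->
  ~~ connect (adj (E :\ [set c; d])) c u ->
  f (C i :&: side E L [set c; d] c) <= ewidth f E L [set c; d].
Proof.
move=> cdE ne ncu; rewrite (bd_ewidth bd fC cdE) setIC; apply: tpart_trace.
by case: (side_nested bd uv_E cdE ne ncu) => ->; rewrite ?orbT.
Qed.

Lemma refine_ewidth_cases e0 : e0 \in E0 ->
  (exists i c d, [/\ [set c; d] \in E, [set c; d] != [set u; v],
     ~~ connect (adj (E :\ [set c; d])) c u, e0 = [set rcopy i c; rcopy i d] &
     ewidth f E0 Lp e0 = f (C i :&: side E L [set c; d] c)])
  \/ ewidth f E0 Lp e0 < k.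
Proof.
case/(refine_edgeP bd) => [i c d cdE ne | i | i | i] ->.
- left; have [ncu | ndu] := bd_far bd u cdE.
    by exists i, c, d; split => //; apply: refine_ewidth_copy.
  rewrite setUC in cdE ne ndu; exists i, d, c; rewrite [[set rcopy i c; _]]setUC.
  by split => //; apply: refine_ewidth_copy.
- right; rewrite (refine_ewidth_uw bd uv_E trip fC i (erefl _)) -fW.
  by case: (tpart_small i).
- right; rewrite setUC (refine_ewidth_uw bd uv_E trip fC i (setUC _ _)).
  by rewrite (bd_side_compl bd uv_E) -setDE -fW; case: (tpart_small i).
- right; rewrite (refine_ewidth_wt u v bd trip fC i) -fW.
  by case: (tpart_small i); rewrite -muln2 => *; lia.
Qed.

Lemma refine_ewidth_le : {in E0, forall e0, ewidth f E0 Lp e0 <= k}.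
Proof.
move=> e0 /refine_ewidth_cases [[i [c [d [cdE ne ncu _ ->]]]] | /ltnW //].
exact: leq_trans (copy_trace_le i cdE ne ncu) (E_width cdE).
Qed.

Lemma refine_wide_edge e0 : e0 \in [set e0 in E0 | ewidth f E0 Lp e0 == k] ->
  exists i c d, [/\ [set c; d] \in E, [set c; d] != [set u; v],
     ~~ connect (adj (E :\ [set c; d])) c u, e0 = [set rcopy i c; rcopy i d] &
     f (C i :&: side E L [set c; d] c) = k /\ ewidth f E L [set c; d] = k].
Proof.
rewrite inE => /andP [e0E /eqP ek].
case: (refine_ewidth_cases e0E) => [[i [c [d [cdE ne ncu e0_eq ew]]]] | ]; last by rewrite ek ltnn.
exists i, c, d; split => //.
by have := copy_trace_le i cdE ne ncu; have := E_width cdE; rewrite -ew ek; lia.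
Qed.

Lemma wide_copies_eq i j c d : [set c; d] \in E ->
  f (C i :&: side E L [set c; d] c) = k -> f (C j :&: side E L [set c; d] c) = k ->
  ewidth f E L [set c; d] = k -> i = j.
Proof.
move=> cdE ki kj ek; case: (eqVneq i j) => // ij; exfalso.
have := connf_disjoint_traces f_conn (side E L [set c; d] c) (tpart_disjoint ij).
rewrite -(bd_ewidth bd fC cdE) ek ![_ :&: C _]setIC ki kj.
by case: (tpart_small i) => + _ _; case: (tpart_small j) => + _ _; rewrite fW -!muln2; lia.
Qed.

Lemma refine_nwide_lt : nwide f E0 Lp k < nwide f E L k.
Proof.
pose psi (e0 : {set rnode N}) := [set n | [exists j, rcopy j n \in e0]].
have psiE i c d : psi [set rcopy i c; rcopy i d] = [set c; d].
  apply/setP => n; rewrite !inE; apply/existsP/orP => [[j] | cd].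
    by rewrite !inE !rcopy_eq => /orP [] /andP [_ ->]; [left | right].
  by exists i; rewrite !inE !rcopy_eq eqxx; apply/orP.
set S0 := [set e0 in E0 | ewidth f E0 Lp e0 == k].
have psi_inj : {in S0 &, injective psi}.
  move=> e1 e2 /refine_wide_edge [i [c [d [cdE _ ncu -> [ki ek]]]]].
  move=> /refine_wide_edge [j [c' [d' [_ _ ncu' -> [kj _]]]]]; rewrite !psiE => cd_eq.
  (* Both copies are oriented away from u. *)
  have [? ?] : c = c' /\ d = d'.
    case: (set2_inj cd_eq) => // -[cd' dc']; subst c' d'; rewrite setUC in ncu'.
    by case: (connect_edge_ends (bd_connect bd) c d u) => cu; [move: ncu | move: ncu']; rewrite cu.
  by subst c' d'; rewrite (wide_copies_eq cdE ki kj ek).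
have img : psi @: S0 \subset [set e in E | ewidth f E L e == k] :\ [set u; v].
  apply/subsetP => _ /imsetP [_ /refine_wide_edge [i [c [d [cdE ne _ -> [_ ek]]]]] ->].
  by rewrite psiE !inE ne cdE ek eqxx.
have uv_wide : [set u; v] \in [set e in E | ewidth f E L e == k].
  by rewrite inE uv_E (bd_ewidth bd fC uv_E) fW eqxx.
rewrite /nwide -(card_in_imset psi_inj) (cardsD1 [set u; v] [set e in E | _]) uv_wide.
exact: subset_leq_card img.
Qed.

End RefinementWidth.

Theorem theorem4 (V N : finType) (f : {set V} -> nat) (E : {set {set N}})
    (L : V -> N) (k h : nat) (u v : N) :
  connectivity_function f ->
  is_branch_decomp E L ->
  width f E L = k ->
  nwide f E L k = h ->
  1 <= h ->
  [set u; v] \in E ->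
  ewidth f E L [set u; v] = k ->
  let W := side E L [set u; v] u in
  (exists C1 C2 C3, improvement f W C1 C2 C3) ->
  exists C1 C2 C3, improvement f W C1 C2 C3 /\
    forall s, is_refinement E L u v C1 C2 C3 s ->
      width f s.2 (refine_lab L C1 C2) <= k /\
      nwide f s.2 (refine_lab L C1 C2) k < h.
Proof.
move=> f_conn bd wk nh _ uv_E ewk W [C1 [C2 [C3 imp]]].
have fW : f W = k by rewrite -ewk (bd_ewidth bd (connfC f_conn) uv_E).
have E_width : {in E, forall e, ewidth f E L e <= k}.
  by move=> e eE; rewrite -wk /width (bigD1 e) //= leq_maxl.
have [D1 [D2 [D3 [impD btD]]]] := improvement_bounded_traces f_conn imp.
exists D1, D2, D3; split=> // s [red _].
have labelled z : [pred n | n \in codom (refine_lab L D1 D2)] (refine_lab L D1 D2 z).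
  exact: codom_f.
have inv := reduction_inv_star labelled red (refine_reduction_inv bd uv_E D1 D2).
have E0_width := refine_ewidth_le f_conn bd uv_E E_width fW impD btD.
have [-> le_nwide] := reduction_inv_width E0_width inv.
split=> //; rewrite -nh; apply: leq_ltn_trans le_nwide _.
exact: refine_nwide_lt f_conn bd uv_E E_width fW impD btD.
Qed.
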